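(* If $Q=ABA'B'$ is a quadrilateral in $K^2$, possibly improper, then the pairs of opposite sides of $Q$ ($A,A'$ and $B,B'$) are $Q$-orthogonal, and the two diagonals of $Q$ are $Q$-orthogonal.
   Context: $K$ is a field of characteristic $\neq 2$. Every line $L$ in $K^2$ has an equation $tX-uY+v=0$ normalized so that $t=1$ if $u=0$ and $u=1$ if $u\neq 0$; coefficients denoted $t_L,u_L,v_L$. A quadrilateral $Q=ABA'B'$ consists of four distinct lines $A,B,A',B'$ (sides), not all through one point, with adjacent sides ($A,B$; $B,A'$; $A',B'$; $B',A$) not parallel; opposite sides may be parallel. Vertices: $A\cap B$, $B\cap A'$, $A'\cap B'$, $B'\cap A$; three sides may be concurrent, in which case two vertices coincide and $Q$ is improper. The diagonals are the line through $A\cap B$ and $A'\cap B'$ and the line through $B\cap A'$ and $B'\cap A$ (the lines through nonadjacent vertices). Let $\alpha=t_Au_Bu_{A'}u_{B'}-u_At_Bu_{A'}u_{B'}+u_Au_Bt_{A'}u_{B'}-u_Au_Bu_{A'}t_{B'}$, $\beta=t_Au_Bt_{A'}u_{B'}-u_At_Bu_{A'}t_{B'}$, $\gamma=t_At_Bt_{A'}u_{B'}-t_At_Bu_{A'}t_{B'}+t_Au_Bt_{A'}t_{B'}-u_At_Bt_{A'}t_{B'}$, and $\langle \mathbf v,\mathbf w\rangle_Q=\mathbf v^T\begin{pmatrix}\gamma&-\beta\\-\beta&\alpha\end{pmatrix}\mathbf w$. Lines $\ell_1,\ell_2$ are $Q$-orthogonal if $\langle (u_{\ell_1},t_{\ell_1}),(u_{\ell_2},t_{\ell_2})\rangle_Q=0$.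 *)

From HB Require Import structures.
From mathcomp Require Import all_boot all_order all_algebra.
Set Implicit Arguments. Unset Strict Implicit. Unset Printing Implicit Defensive.
Import GRing.Theory.
Local Open Scope ring_scope.

(* A line of K^2, given by its normalized equation  t X - u Y + v = 0 :
   t = 1 if u = 0, and u = 1 if u <> 0. *)
Record line (K : fieldType) := Line {
  t_ : K; u_ : K; v_ : K;
  line_normalized : ((u_ == 0) && (t_ == 1)) || (u_ == 1) }.

Definition on_line (K : fieldType) (L : line K) (p : K * K) : Prop :=
  t_ L * p.1 - u_ L * p.2 + v_ L = 0.

Definition parallel (K : fieldType) (L M : line K) : Prop :=
  L = M \/ ~ (exists p, on_line L p /\ on_line M p).

Definition is_quadrilateral (K : fieldType) (A B A' B' : line K) : Prop :=
  (A <> B /\ A <> A' /\ A <> B' /\ B <> A' /\ B <> B' /\ A' <> B') /\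
  ~ (exists p, [/\ on_line A p, on_line B p, on_line A' p & on_line B' p]) /\
  [/\ ~ parallel A B, ~ parallel B A', ~ parallel A' B' & ~ parallel B' A].

Definition qalpha (K : fieldType) (A B A' B' : line K) : K :=
  t_ A * u_ B * u_ A' * u_ B' - u_ A * t_ B * u_ A' * u_ B'
  + u_ A * u_ B * t_ A' * u_ B' - u_ A * u_ B * u_ A' * t_ B'.

Definition qbeta (K : fieldType) (A B A' B' : line K) : K :=
  t_ A * u_ B * t_ A' * u_ B' - u_ A * t_ B * u_ A' * t_ B'.

Definition qgamma (K : fieldType) (A B A' B' : line K) : K :=
  t_ A * t_ B * t_ A' * u_ B' - t_ A * t_ B * u_ A' * t_ B'
  + t_ A * u_ B * t_ A' * t_ B' - u_ A * t_ B * t_ A' * t_ B'.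

Definition qform (K : fieldType) (A B A' B' : line K) (v w : K * K) : K :=
  v.1 * (qgamma A B A' B' * w.1 - qbeta A B A' B' * w.2)
  + v.2 * (- qbeta A B A' B' * w.1 + qalpha A B A' B' * w.2).

Definition Q_orthogonal (K : fieldType) (A B A' B' : line K) (l1 l2 : line K)
  : Prop :=
  qform A B A' B' (u_ l1, t_ l1) (u_ l2, t_ l2) = 0.

(* The intersection point of two non-parallel lines L, M is given by Cramer's
   rule, with denominator [line_det L M].  Clearing these denominators, the
   Q-orthogonality of the direction vectors of the two diagonals becomes a
   polynomial identity in the coefficients of the four sides, as does the
   Q-orthogonality of opposite sides.  A line [t X - u Y + v = 0] has direction
   [(u, t)], so the orthogonality of the diagonal directions transfers to the
   diagonals themselves as soon as each diagonal joins two distinct vertices,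
   which holds because the four sides are not concurrent.  No assumption on
   the characteristic of K is needed. *)

From HB Require Import structures.
From mathcomp Require Import all_boot all_order all_algebra.
From mathcomp Require Import ring.
Import GRing.Theory.
Set Implicit Arguments. Unset Strict Implicit.
Local Open Scope ring_scope.

Section QuadrilateralForm.
Variable K : fieldType.
Implicit Types (L M D : line K) (p q : K * K).

Definition line_det L M : K := t_ L * u_ M - t_ M * u_ L.

Definition vec p q : K * K := (q.1 - p.1, q.2 - p.2).

Lemma line_ext L M : t_ L = t_ M -> u_ L = u_ M -> v_ L = v_ M -> L = M.
Proof.
case: L => t1 u1 v1 n1; case: M => t2 u2 v2 n2 /= e1 e2 e3; subst.
by congr Line; apply: bool_irrelevance.
Qed.

Lemma line_det_eq0 L M : line_det L M = 0 -> t_ L = t_ M /\ u_ L = u_ M.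
Proof.
rewrite /line_det; case: L => t1 u1 v1 +; case: M => t2 u2 v2 + /=.
move=> /orP [/andP [/eqP -> /eqP ->] | /eqP ->]
       /orP [/andP [/eqP -> /eqP ->] | /eqP ->].
- by [].
- by rewrite mulr0 mulr1 sub0r => /eqP; rewrite oppr_eq0 oner_eq0.
- by rewrite mulr1 mulr0 subr0 => /eqP; rewrite oner_eq0.
- by rewrite !mulr1 => /eqP; rewrite subr_eq0 => /eqP ->.
Qed.

Lemma line_det_neq0 L M : ~ parallel L M -> line_det L M != 0.
Proof.
move=> nLM; apply/eqP => /line_det_eq0 [et eu]; apply: (nLM); right.
move=> [p [pL pM]]; apply: nLM; left; apply: line_ext => //.
move: pL pM; rewrite /on_line et eu => pL pM.
by apply: (addrI (t_ M * p.1 - u_ M * p.2)); rewrite pL pM.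
Qed.

Lemma cramer_meet L M p : on_line L p -> on_line M p ->
  line_det L M * p.1 = v_ M * u_ L - v_ L * u_ M /\
  line_det L M * p.2 = t_ L * v_ M - v_ L * t_ M.
Proof.
rewrite /on_line /line_det => pL pM; split; apply/eqP; rewrite -subr_eq0; apply/eqP.
- transitivity (u_ M * (t_ L * p.1 - u_ L * p.2 + v_ L)
                - u_ L * (t_ M * p.1 - u_ M * p.2 + v_ M)); first by ring.
  by rewrite pL pM; ring.
- transitivity (t_ M * (t_ L * p.1 - u_ L * p.2 + v_ L)
                - t_ L * (t_ M * p.1 - u_ M * p.2 + v_ M)); first by ring.
  by rewrite pL pM; ring.
Qed.

Lemma on_line_vec D p q : on_line D p -> on_line D q ->
  t_ D * (vec p q).1 - u_ D * (vec p q).2 = 0.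
Proof.
rewrite /on_line => pD qD.
transitivity ((t_ D * q.1 - u_ D * q.2 + v_ D) - (t_ D * p.1 - u_ D * p.2 + v_ D)).
  by rewrite /=; ring.
by rewrite pD qD subr0.
Qed.

Lemma vec_neq0 p q : p <> q -> vec p q != (0, 0).
Proof.
case: p q => [a b] [c d] neq; apply: contra_notN neq; rewrite xpair_eqE.
by rewrite !subr_eq0 /= => /andP [/eqP -> /eqP ->].
Qed.

Variables A B A' B' : line K.

Lemma qformC v w : qform A B A' B' v w = qform A B A' B' w v.
Proof. by rewrite /qform; ring. Qed.

Lemma qformZ a b v w :
  qform A B A' B' (a * v.1, a * v.2) (b * w.1, b * w.2) =
  a * b * qform A B A' B' v w.
Proof. by rewrite /qform /=; ring. Qed.

(* [(u_ D, t_ D)] spans the direction of [D], so any nonzero direction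
   vector [d] of [D] is proportional to it. *)
Lemma qform_line_dir D d w :
  t_ D * d.1 - u_ D * d.2 = 0 -> d != (0, 0) ->
  qform A B A' B' d w = 0 -> qform A B A' B' (u_ D, t_ D) w = 0.
Proof.
case: d => [x y] /= dD; rewrite xpair_eqE negb_and => d_neq0 dw.
set f := qform A B A' B' (u_ D, t_ D) w.
have fx : f * x = u_ D * qform A B A' B' (x, y) w.
  apply/eqP; rewrite -subr_eq0; apply/eqP.
  transitivity ((t_ D * x - u_ D * y) *
    (- qbeta A B A' B' * w.1 + qalpha A B A' B' * w.2)); first by rewrite /f /qform /=; ring.
  by rewrite dD mul0r.
have fy : f * y = t_ D * qform A B A' B' (x, y) w.
  apply/eqP; rewrite -subr_eq0; apply/eqP.
  transitivity (- (t_ D * x - u_ D * y) *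
    (qgamma A B A' B' * w.1 - qbeta A B A' B' * w.2)); first by rewrite /f /qform /=; ring.
  by rewrite dD oppr0 mul0r.
rewrite dw !mulr0 in fx fy.
by case/orP: d_neq0 => nz; [move/eqP: fx | move/eqP: fy];
  rewrite mulf_eq0 (negbTE nz) orbF => /eqP.
Qed.

Lemma Q_orthogonalAA' : Q_orthogonal A B A' B' A A'.
Proof. by rewrite /Q_orthogonal /qform /qalpha /qbeta /qgamma /=; ring. Qed.

Lemma Q_orthogonalBB' : Q_orthogonal A B A' B' B B'.
Proof. by rewrite /Q_orthogonal /qform /qalpha /qbeta /qgamma /=; ring. Qed.

Lemma qform_diagonals_scaled (P1 P2 P3 P4 : K * K) :
  on_line A P1 -> on_line B P1 -> on_line B P2 -> on_line A' P2 ->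
  on_line A' P3 -> on_line B' P3 -> on_line B' P4 -> on_line A P4 ->
  line_det A B * line_det A' B' * (line_det B A' * line_det B' A) *
  qform A B A' B' (vec P1 P3) (vec P2 P4) = 0.
Proof.
move=> /cramer_meet h1 /h1 [x1 y1] /cramer_meet h2 /h2 [x2 y2].
move=> /cramer_meet h3 /h3 [x3 y3] /cramer_meet h4 /h4 [x4 y4].
have cross a b (r s : K) : a * b * (r - s) = a * (b * r) - b * (a * s) by ring.
rewrite -qformZ /vec /= !cross x1 y1 x2 y2 x3 y3 x4 y4.
by rewrite /qform /qalpha /qbeta /qgamma /line_det /=; ring.
Qed.

End QuadrilateralForm.

Theorem proposition2p5 (K : fieldType) (hK : (2%:R : K) != 0)
  (A B A' B' : line K) :
  is_quadrilateral A B A' B' ->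
  [/\ Q_orthogonal A B A' B' A A',
      Q_orthogonal A B A' B' B B' &
      forall (P1 P2 P3 P4 : K * K) (D1 D2 : line K),
        on_line A P1 -> on_line B P1 ->     (* P1 = A /\ B   *)
        on_line B P2 -> on_line A' P2 ->    (* P2 = B /\ A'  *)
        on_line A' P3 -> on_line B' P3 ->   (* P3 = A' /\ B' *)
        on_line B' P4 -> on_line A P4 ->    (* P4 = B' /\ A  *)
        on_line D1 P1 -> on_line D1 P3 ->   (* D1 = diagonal through P1, P3 *)
        on_line D2 P2 -> on_line D2 P4 ->   (* D2 = diagonal through P2, P4 *)
        Q_orthogonal A B A' B' D1 D2].
Proof.
move=> [_ [not_concurrent [pAB pBA' pA'B' pB'A]]].
split; [exact: Q_orthogonalAA' | exact: Q_orthogonalBB' |].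
move=> P1 P2 P3 P4 D1 D2 h1A h1B h2B h2A' h3A' h3B' h4B' h4A d1P1 d1P3 d2P2 d2P4.
have diag : qform A B A' B' (vec P1 P3) (vec P2 P4) = 0.
  move/eqP: (qform_diagonals_scaled h1A h1B h2B h2A' h3A' h3B' h4B' h4A).
  by rewrite !mulf_eq0 !(negbTE (line_det_neq0 _)) //= => /eqP.
have P13 : P1 <> P3 by move=> e; subst P3; apply: not_concurrent; exists P1.
have P24 : P2 <> P4 by move=> e; subst P4; apply: not_concurrent; exists P2.
rewrite /Q_orthogonal.
apply: (qform_line_dir (on_line_vec d1P1 d1P3) (vec_neq0 P13)).
rewrite qformC; apply: (qform_line_dir (on_line_vec d2P2 d2P4) (vec_neq0 P24)).
by rewrite qformC diag.
Qed.
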